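(* Let $a,b>0$ with $ab<1$, let $\varphi\in\mathcal{B}_a$, $f\in\mathcal{B}_b$ and $\theta\ge0$. Then the function $g=\varphi(\Delta_\theta)f$ belongs to $\mathcal{B}_c$ with $c=b(1-ab)^{-1}$, and $$\|g\|_c\le(1-ab)^{-\theta}\|\varphi\|_a\|f\|_b.$$
   Context: For $b>0$ and entire $f$, $\|f\|_b=\sup_{k\in\mathbb{N}_0}b^{-k}|f^{(k)}(0)|$, and $\mathcal{B}_b=\{f \text{ entire}:\|f\|_b<\infty\}$. $\Delta_\theta$ is the operator $\Delta_\theta f=\theta f'+zf''$, and for entire $\varphi,f$, $\varphi(\Delta_\theta)f=\sum_{k=0}^\infty\sum_{m=0}^\infty\frac{\varphi^{(k)}(0)}{k!}\frac{f^{(m)}(0)}{m!}\Delta_\theta^kz^m$. *)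

From Stdlib Require Import Reals.
From Coquelicot Require Import Coquelicot.

Open Scope R_scope.

Definition entire (f : C -> C) : Prop := forall z : C, ex_derive f z.

Fixpoint Cderive_n (k : nat) (f : C -> C) : C -> C :=
  match k with
  | O => f
  | S k' => C_derive (Cderive_n k' f)
  end.

Definition Bseq (b : R) (f : C -> C) (k : nat) : R :=
  / (b ^ k) * Cmod (Cderive_n k f (RtoC 0)).

Definition normB (b : R) (f : C -> C) : R :=
  real (Lub_Rbar (fun x => exists k : nat, x = Bseq b f k)).

Definition inB (b : R) (f : C -> C) : Prop :=
  entire f /\ exists M : R, forall k : nat, Bseq b f k <= M.

Definition Delta (theta : R) (h : C -> C) : C -> C :=
  fun z => (RtoC theta * C_derive h z + z * C_derive (C_derive h) z)%C.

Fixpoint Delta_pow (theta : R) (k : nat) (h : C -> C) : C -> C :=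
  match k with
  | O => h
  | S k' => Delta theta (Delta_pow theta k' h)
  end.

Definition CSeries (u : nat -> C) : C :=
  (Series (fun n => Re (u n)), Series (fun n => Im (u n))).

Definition op_term (theta : R) (phi f : C -> C) (z : C) (k m : nat) : C :=
  (Cderive_n k phi (RtoC 0) / RtoC (INR (Factorial.fact k))
   * (Cderive_n m f (RtoC 0) / RtoC (INR (Factorial.fact m)))
   * Delta_pow theta k (fun w => Cpow w m) z)%C.

Definition op_inner (theta : R) (phi f : C -> C) (z : C) (k : nat) : C :=
  CSeries (op_term theta phi f z k).

Definition phi_Delta (theta : R) (phi f : C -> C) : C -> C :=
  fun z => CSeries (op_inner theta phi f z).

From Pilot Require Import Defs.
From Stdlib Require Import Reals Lra Lia FunctionalExtensionality Factorial.
From Coquelicot Require Import Coquelicot.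
Open Scope R_scope.

(* Δ_θ acts diagonally on monomials, Δ_θ z^m = m (θ + m - 1) z^(m-1), so
   Δ_θ^k z^(k+n) = (k+n)!/n! (θ+n)_k z^n with (s)_k the rising factorial.  Hence
   the terms (k, k+n) of the double series φ(Δ_θ)f contribute to z^n a coefficient
   of modulus at most ‖φ‖_a ‖f‖_b b^n/n! · (θ+n)_k (ab)^k/k!, and the binomial series
   Σ_k (s)_k x^k/k! = (1-x)^(-s) sums these bounds to
   (1-ab)^(-θ) ‖φ‖_a ‖f‖_b c^n/n!.  The double series is therefore absolutely
   convergent and may be summed along the columns n, which exhibits φ(Δ_θ)f as a
   power series of exponential type whose n-th derivative at 0 is n! times its
   n-th coefficient. *)

(** * Complex series *)

Lemma sum_n_Re (w : nat -> C) N : Re (sum_n w N) = sum_n (fun n => Re (w n)) N.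
Proof. induction N; [now rewrite !sum_O | rewrite !sum_Sn; simpl; now rewrite <- IHN]. Qed.

Lemma sum_n_Im (w : nat -> C) N : Im (sum_n w N) = sum_n (fun n => Im (w n)) N.
Proof. induction N; [now rewrite !sum_O | rewrite !sum_Sn; simpl; now rewrite <- IHN]. Qed.

Lemma is_series_C_parts (w : nat -> C) (l : C) :
  is_series w l <->
  is_series (fun n => Re (w n)) (Re l) /\ is_series (fun n => Im (w n)) (Im l).
Proof.
  unfold is_series. rewrite (filterlim_locally (U := C_UniformSpace)).
  rewrite !(filterlim_locally (U := R_UniformSpace)). split.
  - intro H. split; intro eps; eapply filter_imp; try exact (H eps); intros N [H1 H2].
    + rewrite <- sum_n_Re. exact H1.
    + rewrite <- sum_n_Im. exact H2.
  - intros [H1 H2] eps. generalize (filter_and _ _ (H1 eps) (H2 eps)).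
    apply filter_imp. intros N [HRe HIm]. split.
    + change (ball (Re l) eps (Re (sum_n w N))). now rewrite sum_n_Re.
    + change (ball (Im l) eps (Im (sum_n w N))). now rewrite sum_n_Im.
Qed.

Lemma CSeries_unique (w : nat -> C) (l : C) : is_series w l -> CSeries w = l.
Proof.
  intros [HRe HIm]%is_series_C_parts. unfold CSeries.
  rewrite (is_series_unique _ _ HRe), (is_series_unique _ _ HIm). now destruct l.
Qed.

Lemma CSeries_correct (w : nat -> C) : ex_series w -> is_series w (CSeries w).
Proof. intros [l Hl]. now rewrite (CSeries_unique _ _ Hl). Qed.

Lemma ex_series_C_parts (w : nat -> C) :
  ex_series (fun n => Re (w n)) -> ex_series (fun n => Im (w n)) -> ex_series w.
Proof. intros [x Hx] [y Hy]. exists (x, y). now apply is_series_C_parts. Qed.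

Lemma CSeries_shift (w : nat -> C) (k : nat) :
  (forall m, (m < k)%nat -> w m = RtoC 0) -> CSeries w = CSeries (fun j => w (k + j)%nat).
Proof.
  intro H. unfold CSeries. f_equal;
    [apply (Series_incr_n_aux (fun n => Re (w n))) | apply (Series_incr_n_aux (fun n => Im (w n)))];
    intros m Hm; now rewrite (H m Hm).
Qed.

Lemma Cmod_CSeries_le (w : nat -> C) (u : nat -> R) :
  (forall n, Cmod (w n) <= u n) -> ex_series u -> Cmod (CSeries w) <= Series u.
Proof.
  intros Hwu Hu.
  assert (Hw : is_series w (CSeries w)).
  { apply CSeries_correct, (ex_series_le (V := C_CompleteNormedModule) _ u Hwu Hu). }
  assert (Hnorm : is_lim_seq (fun N => Cmod (sum_n w N)) (Cmod (CSeries w))).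
  { eapply filterlim_comp; [exact Hw | exact (filterlim_norm (V := C_NormedModule) _)]. }
  refine (is_lim_seq_le _ (sum_n u) _ (Series u) _ Hnorm _); [| exact (Series_correct _ Hu)].
  induction n; [rewrite !sum_O; apply Hwu |].
  rewrite !sum_Sn. eapply Rle_trans; [apply Cmod_triangle |].
  apply Rplus_le_compat; [exact IHn | apply Hwu].
Qed.

(** * Double series *)

Lemma sum_n_S_R (u : nat -> R) N : sum_n u (S N) = sum_n u N + u (S N).
Proof. exact (sum_Sn u N). Qed.

Section NonnegSeries.

Variable a : nat -> R.
Hypothesis a_ge0 : forall n, 0 <= a n.

Lemma sum_n_ge0 N : 0 <= sum_n a N.
Proof.
  induction N; [rewrite sum_O; apply a_ge0 |].
  rewrite sum_n_S_R. generalize (a_ge0 (S N)). lra.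
Qed.

Lemma sum_n_le_Series N : ex_series a -> sum_n a N <= Series a.
Proof.
  intro Ha. apply (is_lim_seq_incr_compare (sum_n a) (Series a) (Series_correct _ Ha)).
  intro n. rewrite sum_n_S_R. generalize (a_ge0 (S n)). lra.
Qed.

Lemma term_le_Series k : ex_series a -> a k <= Series a.
Proof.
  intro Ha. eapply Rle_trans; [| exact (sum_n_le_Series k Ha)].
  destruct k as [|k]; [rewrite sum_O; lra |].
  rewrite sum_n_S_R. generalize (sum_n_ge0 k). lra.
Qed.

Lemma Series_ge0 : ex_series a -> 0 <= Series a.
Proof. intro Ha. exact (Rle_trans _ _ _ (a_ge0 O) (term_le_Series O Ha)). Qed.

Lemma ex_series_bounded_sum_n M :
  (forall N, sum_n a N <= M) -> ex_series a /\ Series a <= M.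
Proof.
  intro HM.
  assert (Hincr : forall n, sum_n a n <= sum_n a (S n)).
  { intro n. rewrite sum_n_S_R. generalize (a_ge0 (S n)). lra. }
  destruct (ex_finite_lim_seq_incr _ M Hincr HM) as [l Hl].
  rewrite (is_series_unique a l Hl).
  split; [now exists l | exact (is_lim_seq_le _ _ _ _ HM Hl (is_lim_seq_const M))].
Qed.

End NonnegSeries.

Lemma Series_sum_n (q : nat -> nat -> R) K :
  (forall k, ex_series (q k)) ->
  ex_series (fun n => sum_n (fun k => q k n) K) /\
  Series (fun n => sum_n (fun k => q k n) K) = sum_n (fun k => Series (q k)) K.
Proof.
  intro Hq. induction K as [|K [IHex IHeq]].
  - rewrite sum_O. split.
    + eapply ex_series_ext; [| exact (Hq O)]. intro n. now rewrite sum_O.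
    + apply Series_ext. intro n. now rewrite sum_O.
  - rewrite sum_n_S_R, <- IHeq. split.
    + eapply ex_series_ext; [| exact (ex_series_plus _ _ IHex (Hq (S K)))].
      intro n. now rewrite sum_Sn.
    + rewrite <- Series_plus by auto. apply Series_ext. intro n. now rewrite sum_n_S_R.
Qed.

Lemma Series_swap_le (p : nat -> nat -> R) :
  (forall k n, 0 <= p k n) ->
  (forall k, ex_series (p k)) -> ex_series (fun k => Series (p k)) ->
  (forall n, ex_series (fun k => p k n)) ->
  ex_series (fun n => Series (fun k => p k n)) /\
  Series (fun n => Series (fun k => p k n)) <= Series (fun k => Series (p k)).
Proof.
  intros Hp Hrow Hrows Hcol.
  apply ex_series_bounded_sum_n.
  { intro n. apply Series_ge0; auto. }
  intro N. destruct (Series_sum_n (fun n k => p k n) N Hcol) as [_ <-].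
  apply Series_le; [| exact Hrows].
  intro k. split; [apply sum_n_ge0; auto | apply sum_n_le_Series; auto].
Qed.

Lemma tonelli (p : nat -> nat -> R) :
  (forall k n, 0 <= p k n) ->
  (forall n, ex_series (fun k => p k n)) -> ex_series (fun n => Series (fun k => p k n)) ->
  (forall k, ex_series (p k)) /\ ex_series (fun k => Series (p k)) /\
  Series (fun k => Series (p k)) = Series (fun n => Series (fun k => p k n)).
Proof.
  intros Hp Hcol Hcols.
  assert (Hrow : forall k, ex_series (p k)).
  { intro k.
    apply (ex_series_le (V := R_CompleteNormedModule) _ (fun n => Series (fun k => p k n))); [| exact Hcols].
    intro n. change (Rabs (p k n) <= Series (fun k => p k n)).
    rewrite Rabs_pos_eq by auto. apply (term_le_Series (fun k => p k n)); auto. }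
  destruct (Series_swap_le (fun n k => p k n) (fun n k => Hp k n) Hcol Hcols Hrow)
    as [Hrows Hle].
  destruct (Series_swap_le p Hp Hrow Hrows Hcol) as [_ Hge].
  repeat split; auto. now apply Rle_antisym.
Qed.

Lemma fubini (u v : nat -> nat -> R) :
  (forall k n, Rabs (u k n) <= v k n) ->
  (forall n, ex_series (fun k => v k n)) -> ex_series (fun n => Series (fun k => v k n)) ->
  (forall k, ex_series (u k)) /\ ex_series (fun k => Series (u k)) /\
  Series (fun k => Series (u k)) = Series (fun n => Series (fun k => u k n)).
Proof.
  intros Huv Hcol Hcols.
  assert (Hv : forall k n, 0 <= v k n) by (intros k n; exact (Rle_trans _ _ _ (Rabs_pos _) (Huv k n))).
  set (w := fun k n => u k n + v k n).
  assert (Hw : forall k n, 0 <= w k n <= 2 * v k n).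
  { intros k n. unfold w. generalize (Huv k n). intros []%Rabs_le_between. lra. }
  assert (Hcolu : forall n, ex_series (fun k => u k n)).
  { intro n. apply (ex_series_le (V := R_CompleteNormedModule) _ (fun k => v k n));
      [intro k; apply Huv | apply Hcol]. }
  assert (Hcolw : forall n, ex_series (fun k => w k n)).
  { intro n. exact (ex_series_plus _ _ (Hcolu n) (Hcol n)). }
  assert (Hcolsw : ex_series (fun n => Series (fun k => w k n))).
  { apply (ex_series_le (V := R_CompleteNormedModule) _ (fun n => 2 * Series (fun k => v k n))).
    - intro n. change (Rabs (Series (fun k => w k n)) <= 2 * Series (fun k => v k n)).
      rewrite Rabs_pos_eq by (apply Series_ge0; [intro; apply Hw | apply Hcolw]).
      rewrite <- Series_scal_l. apply Series_le; [intro k; apply Hw |].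
      exact (ex_series_scal (V := R_NormedModule) 2 _ (Hcol n)).
    - exact (ex_series_scal (V := R_NormedModule) 2 _ Hcols). }
  destruct (tonelli w (fun k n => proj1 (Hw k n)) Hcolw Hcolsw) as [Hroww [Hrowsw Heqw]].
  destruct (tonelli v Hv Hcol Hcols) as [Hrowv [Hrowsv Heqv]].
  assert (Hu : forall k n, u k n = w k n - v k n) by (intros; unfold w; ring).
  assert (Hrowu : forall k, ex_series (u k)).
  { intro k. eapply ex_series_ext; [| exact (ex_series_minus _ _ (Hroww k) (Hrowv k))].
    intro n. symmetry. apply Hu. }
  assert (Hsumu : forall k, Series (u k) = Series (w k) - Series (v k)).
  { intro k. rewrite <- Series_minus by auto. apply Series_ext, Hu. }
  assert (Hsumcol : forall n,
            Series (fun k => u k n) = Series (fun k => w k n) - Series (fun k => v k n)).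
  { intro n. rewrite <- Series_minus by auto. apply Series_ext. intro k. apply Hu. }
  split; [exact Hrowu | split].
  - eapply ex_series_ext; [| exact (ex_series_minus _ _ Hrowsw Hrowsv)].
    intro k. symmetry. apply Hsumu.
  - rewrite (Series_ext _ _ Hsumu), (Series_ext _ _ Hsumcol), !Series_minus by auto.
    now rewrite Heqw, Heqv.
Qed.

Lemma Rabs_Im_le_Cmod (z : C) : Rabs (Im z) <= Cmod z.
Proof. eapply Rle_trans; [apply Rmax_r | apply Rmax_Cmod]. Qed.

Lemma fubini_C (U : nat -> nat -> C) (v : nat -> nat -> R) :
  (forall k n, Cmod (U k n) <= v k n) ->
  (forall n, ex_series (fun k => v k n)) -> ex_series (fun n => Series (fun k => v k n)) ->
  (forall k, ex_series (U k)) /\ ex_series (fun k => CSeries (U k)) /\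
  CSeries (fun k => CSeries (U k)) = CSeries (fun n => CSeries (fun k => U k n)).
Proof.
  intros HUv Hcol Hcols.
  destruct (fubini (fun k n => Re (U k n)) v
              (fun k n => Rle_trans _ _ _ (re_le_Cmod _) (HUv k n)) Hcol Hcols)
    as [HrowRe [HrowsRe HeqRe]].
  destruct (fubini (fun k n => Im (U k n)) v
              (fun k n => Rle_trans _ _ _ (Rabs_Im_le_Cmod _) (HUv k n)) Hcol Hcols)
    as [HrowIm [HrowsIm HeqIm]].
  split; [intro k; now apply ex_series_C_parts | split].
  - now apply ex_series_C_parts.
  - unfold CSeries. simpl. now rewrite HeqRe, HeqIm.
Qed.

(** * The binomial series *)

Fixpoint rising (s : R) (k : nat) : R :=
  match k with
  | O => 1
  | S k => s * rising (s + 1) k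
  end.

Lemma rising_ge0 s k : 0 <= s -> 0 <= rising s k.
Proof.
  revert s. induction k as [|k IH]; intros s Hs; simpl; [lra |].
  apply Rmult_le_pos; [exact Hs | apply IH; lra].
Qed.

Definition binom_partial (N : nat) (s y : R) : R :=
  sum_n (fun k => rising s k / INR (fact k) * y ^ k) N.

Lemma binom_partial_S N s y :
  binom_partial (S N) s y = binom_partial N s y + rising s (S N) / INR (fact (S N)) * y ^ S N.
Proof. unfold binom_partial. now rewrite sum_Sn. Qed.

Lemma binom_partial_at_0 N s : binom_partial N s 0 = 1.
Proof.
  induction N as [|N IH].
  - unfold binom_partial. rewrite sum_O. simpl. field.
  - rewrite binom_partial_S, IH. simpl. ring.
Qed.

Lemma derivable_pt_lim_binom_partial N s y :
  derivable_pt_lim (binom_partial (S N) s) y (s * binom_partial N (s + 1) y).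
Proof.
  induction N as [|N IH].
  - replace (binom_partial 1 s) with (fun t => 1 + s * t).
    + unfold binom_partial. rewrite sum_O. simpl.
      replace (s * (1 / 1 * 1)) with (0 + s * 1) by field.
      apply derivable_pt_lim_plus; [apply derivable_pt_lim_const |].
      apply derivable_pt_lim_scal, derivable_pt_lim_id.
    + apply functional_extensionality. intro t.
      rewrite binom_partial_S. unfold binom_partial. rewrite sum_O. simpl. field.
  - replace (binom_partial (S (S N)) s)
      with (fun t => binom_partial (S N) s t + rising s (S (S N)) / INR (fact (S (S N))) * t ^ S (S N))
      by (apply functional_extensionality; intro t; symmetry; apply binom_partial_S).
    replace (s * binom_partial (S N) (s + 1) y)
      with (s * binom_partial N (s + 1) y
            + rising s (S (S N)) / INR (fact (S (S N))) * (INR (S (S N)) * y ^ pred (S (S N)))).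
    + apply derivable_pt_lim_plus; [exact IH |].
      apply derivable_pt_lim_scal, derivable_pt_lim_pow.
    + rewrite binom_partial_S. simpl pred.
      change (rising s (S (S N))) with (s * rising (s + 1) (S N)).
      rewrite (fact_simpl (S N)), mult_INR.
      assert (Hfact := INR_fact_lt_0 (S N)). assert (HS : 0 < INR (S (S N))) by (apply lt_0_INR; lia).
      field. lra.
Qed.

Lemma derivable_pt_lim_Rpower_1m s t : t < 1 ->
  derivable_pt_lim (fun u => Rpower (1 - u) (- s)) t (s * Rpower (1 - t) (- (s + 1))).
Proof.
  intro Ht.
  replace (s * Rpower (1 - t) (- (s + 1))) with (- s * Rpower (1 - t) (- s - 1) * (0 - 1))
    by (replace (- s - 1) with (- (s + 1)) by ring; ring).
  apply (derivable_pt_lim_comp (fun u => 1 - u) (fun x => Rpower x (- s))).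
  - apply derivable_pt_lim_minus; [apply derivable_pt_lim_const | apply derivable_pt_lim_id].
  - apply derivable_pt_lim_power. lra.
Qed.

Lemma Rpower_1m_ge1 x s : 0 <= x < 1 -> 0 <= s -> 1 <= Rpower (1 - x) (- s).
Proof.
  intros Hx Hs. unfold Rpower.
  assert (ln (1 - x) <= 0) by (rewrite <- ln_1; apply ln_le; lra).
  eapply Rle_trans; [| apply exp_ineq1_le]. nra.
Qed.

Lemma binom_partial_le N s x : 0 <= s -> 0 <= x < 1 ->
  binom_partial N s x <= Rpower (1 - x) (- s).
Proof.
  revert s x. induction N as [|N IH]; intros s x Hs Hx.
  - unfold binom_partial. rewrite sum_O. simpl.
    replace (1 / 1 * 1) with 1 by field. now apply Rpower_1m_ge1.
  - destruct (Req_dec x 0) as [-> | Hx0].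
    { rewrite binom_partial_at_0. apply Rpower_1m_ge1; lra. }
    (* The gap vanishes at 0, and its derivative is s times the gap of order N at s + 1. *)
    set (gap := fun t => Rpower (1 - t) (- s) - binom_partial (S N) s t).
    destruct (MVT_cor2 gap (fun t => s * Rpower (1 - t) (- (s + 1)) - s * binom_partial N (s + 1) t) 0 x)
      as [t [Hgap Ht]]; [lra | |].
    { intros t Ht. apply derivable_pt_lim_minus;
        [apply derivable_pt_lim_Rpower_1m; lra | apply derivable_pt_lim_binom_partial]. }
    assert (Hgap0 : gap 0 = 0).
    { unfold gap, Rpower. rewrite binom_partial_at_0, Rminus_0_r, ln_1, Rmult_0_r, exp_0. ring. }
    assert (binom_partial N (s + 1) t <= Rpower (1 - t) (- (s + 1))) by (apply IH; lra).
    assert (0 <= gap x); [| unfold gap in *; lra].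
    rewrite Hgap0, !Rminus_0_r in Hgap. rewrite Hgap, <- Rmult_minus_distr_l.
    apply Rmult_le_pos; [apply Rmult_le_pos |]; lra.
Qed.

Lemma binom_series_le s x : 0 <= s -> 0 <= x < 1 ->
  ex_series (fun k => rising s k / INR (fact k) * x ^ k) /\
  Series (fun k => rising s k / INR (fact k) * x ^ k) <= Rpower (1 - x) (- s).
Proof.
  intros Hs Hx. apply ex_series_bounded_sum_n.
  - intro k. apply Rmult_le_pos; [apply Rdiv_le_0_compat; [now apply rising_ge0 | apply INR_fact_lt_0] |].
    apply pow_le. lra.
  - intro N. now apply binom_partial_le.
Qed.

(** * The operator Δ_θ on monomials *)

Lemma is_derive_of_quadratic_remainder (f : C -> C) (z l : C) (K : R) :
  0 < K -> (forall h, Cmod h <= 1 -> Cmod (f (z + h) - f z - h * l)%C <= K * Cmod h ^ 2) ->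
  is_derive f z l.
Proof.
  intros HK Hrem. split; [apply is_linear_scal_l |].
  intros x Hx. rewrite <- (is_filter_lim_locally_unique (K := C_AbsRing) _ _ Hx).
  intro eps.
  assert (Hdelta : 0 < Rmin 1 (eps / K))
    by (apply Rmin_pos; [lra | apply Rdiv_lt_0_compat; [apply cond_pos | exact HK]]).
  exists (mkposreal _ Hdelta). intros y Hy.
  change (Cmod (f y - f z - (y - z) * l)%C <= eps * Cmod (y - z)%C).
  change (Cmod (y - z)%C < Rmin 1 (eps / K)) in Hy.
  set (h := (y - z)%C) in *. replace y with (z + h)%C by (unfold h; ring).
  assert (Hh1 : Cmod h <= 1) by (generalize (Rmin_l 1 (eps / K)); lra).
  assert (HhK : K * Cmod h <= eps).
  { generalize (Rmin_r 1 (eps / K)). intro.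
    apply (Rmult_le_reg_r (/ K)); [now apply Rinv_0_lt_compat |].
    replace (K * Cmod h * / K) with (Cmod h) by (field; lra). lra. }
  eapply Rle_trans; [exact (Hrem h Hh1) |].
  generalize (Cmod_ge_0 h). intro. simpl. nra.
Qed.

Definition dCpow (n : nat) (z : C) : C := (RtoC (INR n) * Cpow z (n - 1))%C.

Lemma Cmult_dCpow n z : (z * dCpow n z = RtoC (INR n) * Cpow z n)%C.
Proof.
  unfold dCpow. destruct n as [|n]; [simpl; ring |].
  replace (S n - 1)%nat with n by lia. simpl Cpow. ring.
Qed.

Lemma Cmod_INR n : Cmod (RtoC (INR n)) = INR n.
Proof. rewrite Cmod_R. apply Rabs_pos_eq, pos_INR. Qed.

Lemma Cmod_dCpow_le n z : Cmod (dCpow n z) <= INR n * (1 + Cmod z) ^ n.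
Proof.
  unfold dCpow. rewrite Cmod_mult, Cmod_INR, Cmod_pow.
  apply Rmult_le_compat_l; [apply pos_INR |].
  assert (Hz := Cmod_ge_0 z).
  destruct n as [|n]; [simpl; lra |]. replace (S n - 1)%nat with n by lia.
  apply Rle_trans with ((1 + Cmod z) ^ n); [apply pow_incr; lra |].
  simpl. generalize (pow_le (1 + Cmod z) n ltac:(lra)). nra.
Qed.

Lemma Cpow_remainder_bound n z h : Cmod h <= 1 ->
  Cmod (Cpow (z + h) n - Cpow z n - h * dCpow n z)%C
    <= Cmod h ^ 2 * INR n ^ 2 * (1 + Cmod z) ^ n.
Proof.
  intro Hh1. set (T := 1 + Cmod z).
  assert (HT : 1 <= T) by (unfold T; generalize (Cmod_ge_0 z); lra).
  assert (Hh := Cmod_ge_0 h).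
  induction n as [|n IH].
  - unfold dCpow. simpl. replace (1 - 1 - h * (0 * 1))%C with (RtoC 0) by ring.
    rewrite Cmod_0. lra.
  - set (E := (Cpow (z + h) n - Cpow z n - h * dCpow n z)%C) in *.
    assert (Hrec : (Cpow (z + h) (S n) - Cpow z (S n) - h * dCpow (S n) z
                    = h * h * dCpow n z + (z + h) * E)%C).
    { assert (HS : dCpow (S n) z = (RtoC (INR n) * Cpow z n + Cpow z n)%C).
      { unfold dCpow. replace (S n - 1)%nat with n by lia. rewrite S_INR, RtoC_plus. ring. }
      rewrite HS, <- Cmult_dCpow. unfold E. simpl Cpow. ring. }
    rewrite Hrec. eapply Rle_trans; [apply Cmod_triangle |]. rewrite !Cmod_mult.
    assert (Hzh : Cmod (z + h) <= T) by (eapply Rle_trans; [apply Cmod_triangle | unfold T; lra]).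
    assert (HTn : 1 <= T ^ n) by (apply pow_R1_Rle; lra).
    assert (Hn := pos_INR n).
    assert (H1 : Cmod h * Cmod h * Cmod (dCpow n z) <= Cmod h ^ 2 * ((2 * INR n + 1) * T ^ S n)).
    { assert (HnT : INR n * T ^ n <= (2 * INR n + 1) * T ^ S n).
      { assert (0 <= INR n * T ^ n * (T - 1)) by (apply Rmult_le_pos; [apply Rmult_le_pos |]; lra).
        simpl. nra. }
      replace (Cmod h ^ 2) with (Cmod h * Cmod h) by ring.
      eapply Rle_trans; [apply Rmult_le_compat_l; [nra | apply Cmod_dCpow_le] |].
      apply Rmult_le_compat_l; [nra | exact HnT]. }
    assert (H2 : Cmod (z + h) * Cmod E <= T * (Cmod h ^ 2 * INR n ^ 2 * T ^ n)).
    { apply Rmult_le_compat; [apply Cmod_ge_0 | apply Cmod_ge_0 | exact Hzh | exact IH]. }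
    rewrite S_INR. simpl pow in *. nra.
Qed.

Lemma is_derive_Cpow_scal c n z :
  is_derive (fun w => c * Cpow w n)%C z (c * dCpow n z)%C.
Proof.
  apply is_derive_of_quadratic_remainder with (K := Cmod c * INR n ^ 2 * (1 + Cmod z) ^ n + 1).
  - assert (0 <= Cmod c * INR n ^ 2 * (1 + Cmod z) ^ n); [| lra].
    generalize (Cmod_ge_0 c) (Cmod_ge_0 z) (pos_INR n). intros.
    apply Rmult_le_pos; [apply Rmult_le_pos; [lra | apply pow_le; lra] | apply pow_le; lra].
  - intros h Hh.
    replace (c * Cpow (z + h) n - c * Cpow z n - h * (c * dCpow n z))%C
      with (c * (Cpow (z + h) n - Cpow z n - h * dCpow n z))%C by ring.
    rewrite Cmod_mult.
    eapply Rle_trans; [apply Rmult_le_compat_l; [apply Cmod_ge_0 | exact (Cpow_remainder_bound n z h Hh)] |].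
    generalize (pow_le _ 2 (Cmod_ge_0 h)). intro. nra.
Qed.

Lemma C_derive_Cpow_scal c n :
  C_derive (fun w => c * Cpow w n)%C = (fun w => c * dCpow n w)%C.
Proof. apply functional_extensionality. intro z. apply is_C_derive_unique, is_derive_Cpow_scal. Qed.

Lemma Delta_Cpow_scal theta c n :
  Defs.Delta theta (fun w => c * Cpow w n)%C =
  (fun w => c * RtoC (INR n * (theta + INR (n - 1))) * Cpow w (n - 1))%C.
Proof.
  apply functional_extensionality. intro w. unfold Defs.Delta.
  rewrite C_derive_Cpow_scal.
  replace (fun w => c * dCpow n w)%C with (fun w => c * RtoC (INR n) * Cpow w (n - 1))%C
    by (apply functional_extensionality; intro; unfold dCpow; ring).
  rewrite C_derive_Cpow_scal.
  replace (RtoC theta * (c * dCpow n w) + w * (c * RtoC (INR n) * dCpow (n - 1) w))%C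
    with (RtoC theta * (c * dCpow n w) + c * RtoC (INR n) * (w * dCpow (n - 1) w))%C by ring.
  rewrite Cmult_dCpow. unfold dCpow. rewrite RtoC_mult, RtoC_plus. ring.
Qed.

Fixpoint Delta_coef (theta : R) (k m : nat) : R :=
  match k with
  | O => 1
  | S k => Delta_coef theta k m * (INR (m - k) * (theta + INR (m - k - 1)))
  end.

Lemma Delta_pow_Cpow theta k m :
  Delta_pow theta k (fun w => Cpow w m) =
  (fun w => RtoC (Delta_coef theta k m) * Cpow w (m - k))%C.
Proof.
  induction k as [|k IH].
  - apply functional_extensionality. intro w. simpl. rewrite Nat.sub_0_r. ring.
  - simpl Delta_pow. rewrite IH, Delta_Cpow_scal.
    apply functional_extensionality. intro w. simpl Delta_coef.
    replace (m - S k)%nat with (m - k - 1)%nat by lia. now rewrite (RtoC_mult (Delta_coef theta k m)).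
Qed.

Lemma Delta_coef_lt theta k m : (m < k)%nat -> Delta_coef theta k m = 0.
Proof.
  induction k as [|k IH]; intro Hmk; [lia |]. simpl.
  destruct (Nat.eq_dec m k) as [->|Hne].
  - rewrite Nat.sub_diag. simpl. ring.
  - rewrite IH by lia. ring.
Qed.

Lemma Delta_coef_diag theta k n :
  Delta_coef theta k (k + n) = INR (fact (k + n)) / INR (fact n) * rising (theta + INR n) k.
Proof.
  revert n. induction k as [|k IH]; intro n.
  - simpl. field. apply INR_fact_neq_0.
  - replace (S k + n)%nat with (k + S n)%nat by lia.
    change (Delta_coef theta (S k) (k + S n)) with
      (Delta_coef theta k (k + S n) * (INR (k + S n - k) * (theta + INR (k + S n - k - 1)))).
    replace (k + S n - k)%nat with (S n) by lia. replace (S n - 1)%nat with n by lia.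
    rewrite IH, (fact_simpl n), mult_INR, S_INR, <- Rplus_assoc.
    change (rising (theta + INR n) (S k)) with ((theta + INR n) * rising (theta + INR n + 1) k).
    generalize (INR_fact_lt_0 n) (pos_INR n). intros. field. lra.
Qed.

(** * Power series of exponential type *)

Definition exp_type (c : nat -> C) : Prop :=
  exists M r, 0 <= r /\ forall n, Cmod (c n) <= M * r ^ n / INR (fact n).

Definition Cpseries (c : nat -> C) (z : C) : C := CSeries (fun n => c n * Cpow z n)%C.

Lemma ex_series_exp_terms (x : R) : ex_series (fun n => x ^ n / INR (fact n)).
Proof.
  exists (exp x). eapply is_series_ext; [| exact (proj1 (is_pseries_R _ _ _) (is_exp_Reals x))].
  intro n. simpl. unfold Rdiv. ring.
Qed.

Lemma INR_le_pow2 n : INR n <= 2 ^ n.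
Proof.
  induction n as [|n IH]; [simpl; lra |].
  rewrite S_INR. simpl. generalize (pow_R1_Rle 2 n ltac:(lra)). lra.
Qed.

Lemma exp_type_summable c x p : exp_type c -> 0 <= x ->
  ex_series (fun n => Cmod (c n) * INR n ^ p * x ^ n).
Proof.
  intros [M [r [Hr Hc]]] Hx.
  assert (HM : 0 <= M) by (generalize (Hc O) (Cmod_ge_0 (c O)); simpl; lra).
  apply (ex_series_le (V := R_CompleteNormedModule) _ (fun n => M * ((2 ^ p * r * x) ^ n / INR (fact n)))).
  - intro n. change (Rabs (Cmod (c n) * INR n ^ p * x ^ n) <= M * ((2 ^ p * r * x) ^ n / INR (fact n))).
    assert (Hx_n := pow_le x n Hx). assert (Hr_n := pow_le r n Hr).
    assert (Hn_p := pow_le _ p (pos_INR n)). assert (Hfact := INR_fact_lt_0 n).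
    assert (Hnp : INR n ^ p <= (2 ^ p) ^ n).
    { rewrite <- pow_mult, Nat.mul_comm, pow_mult. apply pow_incr. split; [apply pos_INR | apply INR_le_pow2]. }
    rewrite Rabs_pos_eq by (apply Rmult_le_pos; [apply Rmult_le_pos; [apply Cmod_ge_0 |] |]; assumption).
    apply Rle_trans with (M * r ^ n / INR (fact n) * (2 ^ p) ^ n * x ^ n).
    + apply Rmult_le_compat_r; [exact Hx_n |]. apply Rmult_le_compat; auto using Cmod_ge_0.
    + right. rewrite !Rpow_mult_distr. field. lra.
  - exact (ex_series_scal (V := R_NormedModule) M _ (ex_series_exp_terms _)).
Qed.

Lemma ex_series_Cpseries c z : exp_type c -> ex_series (fun n => c n * Cpow z n)%C.
Proof.
  intro Hc.
  apply (ex_series_le (V := C_CompleteNormedModule) _ (fun n => Cmod (c n) * INR n ^ 0 * Cmod z ^ n)).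
  - intro n. change (Cmod (c n * Cpow z n)%C <= Cmod (c n) * 1 * Cmod z ^ n).
    rewrite Cmod_mult, Cmod_pow. lra.
  - exact (exp_type_summable c _ 0 Hc (Cmod_ge_0 z)).
Qed.

Definition deriv_coef (c : nat -> C) (n : nat) : C := (RtoC (INR (S n)) * c (S n))%C.

Lemma exp_type_deriv_coef c : exp_type c -> exp_type (deriv_coef c).
Proof.
  intros [M [r [Hr Hc]]]. exists (M * r), r. split; [exact Hr |]. intro n.
  unfold deriv_coef. rewrite Cmod_mult, Cmod_INR.
  generalize (Hc (S n)). rewrite fact_simpl, mult_INR. intro HcS.
  assert (Hfact := INR_fact_lt_0 n). assert (HS : 0 < INR (S n)) by (apply lt_0_INR; lia).
  apply Rle_trans with (INR (S n) * (M * r ^ S n / (INR (S n) * INR (fact n)))).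
  - apply Rmult_le_compat_l; [lra | exact HcS].
  - right. simpl pow. field. lra.
Qed.

Lemma is_series_zero {K : AbsRing} {V : NormedModule K} : is_series (fun _ : nat => @zero V) zero.
Proof.
  apply (filterlim_ext (fun _ => zero)); [| apply filterlim_const].
  exact (fun N => eq_sym (sum_n_m_const_zero 0 N)).
Qed.

Lemma Cpseries_0 c : Cpseries c (RtoC 0) = c O.
Proof.
  apply CSeries_unique, (is_series_decr_1 (V := C_NormedModule)).
  match goal with |- is_series _ ?l => replace l with (@zero C_NormedModule) end.
  - eapply is_series_ext; [| exact is_series_zero].
    intro n. simpl. change (RtoC 0 = c (S n) * (0 * Cpow 0 n))%C. ring.
  - simpl. change (RtoC 0 = c O + - (c O * 1))%C. ring.
Qed.

Lemma is_series_dCpow c z : exp_type c ->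
  is_series (fun n => c n * dCpow n z)%C (Cpseries (deriv_coef c) z).
Proof.
  intro Hc. apply (is_series_decr_1 (V := C_NormedModule)).
  match goal with |- is_series _ ?l => replace l with (Cpseries (deriv_coef c) z) end.
  - eapply is_series_ext; [| exact (CSeries_correct _ (ex_series_Cpseries _ z (exp_type_deriv_coef c Hc)))].
    intro n. unfold deriv_coef, dCpow. replace (S n - 1)%nat with n by lia.
    change ((RtoC (INR (S n)) * c (S n)) * Cpow z n = c (S n) * (RtoC (INR (S n)) * Cpow z n))%C. ring.
  - unfold dCpow. simpl.
    change (Cpseries (deriv_coef c) z = Cpseries (deriv_coef c) z + - (c O * (0 * 1)))%C. ring.
Qed.

Lemma is_derive_Cpseries c z : exp_type c -> is_derive (Cpseries c) z (Cpseries (deriv_coef c) z).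
Proof.
  intro Hc.
  set (Mz := Series (fun n => Cmod (c n) * INR n ^ 2 * (1 + Cmod z) ^ n)).
  apply is_derive_of_quadratic_remainder with (K := Rabs Mz + 1); [generalize (Rabs_pos Mz); lra |].
  intros h Hh.
  assert (Hrem : is_series (fun n => c n * (Cpow (z + h) n - Cpow z n - h * dCpow n z))%C
                   (Cpseries c (z + h) - Cpseries c z - h * Cpseries (deriv_coef c) z)%C).
  { eapply is_series_ext; [| exact (is_series_minus _ _ _ _
        (is_series_minus _ _ _ _ (CSeries_correct _ (ex_series_Cpseries c (z + h) Hc))
                                 (CSeries_correct _ (ex_series_Cpseries c z Hc)))
        (is_series_scal_l (V := C_NormedModule) h _ _ (is_series_dCpow c z Hc)))].
    intro n. simpl. change ((c n * Cpow (z + h) n + - (c n * Cpow z n)) + - (h * (c n * dCpow n z))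
                            = c n * (Cpow (z + h) n - Cpow z n - h * dCpow n z))%C. ring. }
  rewrite <- (CSeries_unique _ _ Hrem).
  assert (HS := exp_type_summable c (1 + Cmod z) 2 Hc ltac:(generalize (Cmod_ge_0 z); lra)).
  eapply Rle_trans.
  - apply Cmod_CSeries_le with (u := fun n => Cmod h ^ 2 * (Cmod (c n) * INR n ^ 2 * (1 + Cmod z) ^ n)).
    + intro n. rewrite Cmod_mult.
      eapply Rle_trans; [apply Rmult_le_compat_l; [apply Cmod_ge_0 | exact (Cpow_remainder_bound n z h Hh)] |].
      right. ring.
    + exact (ex_series_scal (V := R_NormedModule) _ _ HS).
  - rewrite Series_scal_l. fold Mz. rewrite Rmult_comm.
    apply Rmult_le_compat_r; [apply pow_le, Cmod_ge_0 | generalize (Rle_abs Mz); lra].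
Qed.

Lemma C_derive_Cpseries c : exp_type c -> C_derive (Cpseries c) = Cpseries (deriv_coef c).
Proof.
  intro Hc. apply functional_extensionality. intro z. apply is_C_derive_unique, is_derive_Cpseries, Hc.
Qed.

Lemma Cderive_n_S_inner k f : Cderive_n (S k) f = Cderive_n k (C_derive f).
Proof.
  induction k as [|k IH]; [reflexivity |].
  change (C_derive (Cderive_n (S k) f) = C_derive (Cderive_n k (C_derive f))). now rewrite IH.
Qed.

Lemma Cderive_n_Cpseries_0 k c : exp_type c ->
  Cderive_n k (Cpseries c) (RtoC 0) = (RtoC (INR (fact k)) * c k)%C.
Proof.
  revert c. induction k as [|k IH]; intros c Hc.
  - simpl. rewrite Cpseries_0. ring.
  - rewrite Cderive_n_S_inner, C_derive_Cpseries, IH by (auto using exp_type_deriv_coef).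
    unfold deriv_coef. rewrite fact_simpl, mult_INR, RtoC_mult. ring.
Qed.

(** * The composition φ(Δ_θ) f *)

Lemma normB_spec b g M : (forall k, Bseq b g k <= M) ->
  (forall k, Bseq b g k <= normB b g) /\ normB b g <= M.
Proof.
  intro HM. unfold normB.
  destruct (Lub_Rbar_correct (fun x => exists k : nat, x = Bseq b g k)) as [Hub Hlub].
  assert (Hle : Rbar_le (Lub_Rbar (fun x => exists k, x = Bseq b g k)) M)
    by (apply Hlub; intros x [k ->]; apply HM).
  assert (Hge : forall k, Rbar_le (Bseq b g k) (Lub_Rbar (fun x => exists k, x = Bseq b g k)))
    by (intro k; apply Hub; now exists k).
  destruct (Lub_Rbar _) as [l | |]; simpl in *; [now split | contradiction | exact (False_ind _ (Hge O))].
Qed.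

Lemma inB_Cderive_bound b g : 0 < b -> inB b g ->
  forall k, Cmod (Cderive_n k g (RtoC 0)) <= normB b g * b ^ k.
Proof.
  intros Hb [_ [M HM]] k. destruct (normB_spec b g M HM) as [Hsup _].
  assert (Hbk : 0 < b ^ k) by now apply pow_lt.
  specialize (Hsup k). unfold Bseq in Hsup.
  replace (Cmod (Cderive_n k g (RtoC 0))) with (b ^ k * (/ b ^ k * Cmod (Cderive_n k g (RtoC 0))))
    by (field; lra).
  rewrite Rmult_comm. apply Rmult_le_compat_r; [lra | exact Hsup].
Qed.

Definition taylor_coef (g : C -> C) (k : nat) : C :=
  (Cderive_n k g (RtoC 0) / RtoC (INR (fact k)))%C.

Definition diag_coef (theta : R) (phi f : C -> C) (n k : nat) : C :=
  (taylor_coef phi k * taylor_coef f (k + n) * RtoC (Delta_coef theta k (k + n)))%C.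

Definition comp_coef (theta : R) (phi f : C -> C) (n : nat) : C :=
  CSeries (diag_coef theta phi f n).

Lemma op_term_lt theta phi f z k m : (m < k)%nat -> op_term theta phi f z k m = RtoC 0.
Proof.
  intro Hmk. unfold op_term. rewrite Delta_pow_Cpow, Delta_coef_lt by exact Hmk. ring.
Qed.

Lemma op_term_diag theta phi f z k n :
  op_term theta phi f z k (k + n) = (diag_coef theta phi f n k * Cpow z n)%C.
Proof.
  unfold op_term, diag_coef, taylor_coef. rewrite Delta_pow_Cpow.
  replace (k + n - k)%nat with n by lia. ring.
Qed.

Definition diag_bound (a b theta A F : R) (n k : nat) : R :=
  A * F * (b ^ n / INR (fact n)) * (rising (theta + INR n) k / INR (fact k) * (a * b) ^ k).

Section Composition.

Variables (a b theta A F : R) (phi f : C -> C).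
Hypotheses (Ha : 0 < a) (Hb : 0 < b) (Hab : a * b < 1) (Htheta : 0 <= theta).
Hypothesis Hphi : forall k, Cmod (Cderive_n k phi (RtoC 0)) <= A * a ^ k.
Hypothesis Hf : forall m, Cmod (Cderive_n m f (RtoC 0)) <= F * b ^ m.

Lemma rising_shift_ge0 n k : 0 <= rising (theta + INR n) k.
Proof. apply rising_ge0. generalize (pos_INR n). lra. Qed.

Lemma diag_bound_ge0 n k : 0 <= diag_bound a b theta A F n k.
Proof.
  assert (HA : 0 <= A) by (generalize (Hphi O) (Cmod_ge_0 (Cderive_n O phi (RtoC 0))); simpl; lra).
  assert (HF : 0 <= F) by (generalize (Hf O) (Cmod_ge_0 (Cderive_n O f (RtoC 0))); simpl; lra).
  unfold diag_bound. apply Rmult_le_pos; apply Rmult_le_pos.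
  - now apply Rmult_le_pos.
  - apply Rdiv_le_0_compat; [apply pow_le; lra | apply INR_fact_lt_0].
  - apply Rdiv_le_0_compat; [apply rising_shift_ge0 | apply INR_fact_lt_0].
  - apply pow_le. nra.
Qed.

Lemma Cmod_diag_coef_le n k : Cmod (diag_coef theta phi f n k) <= diag_bound a b theta A F n k.
Proof.
  unfold diag_coef, taylor_coef, diag_bound.
  assert (HC : forall j, RtoC (INR (fact j)) <> RtoC 0)
    by (intros j Hj; apply RtoC_inj in Hj; exact (INR_fact_neq_0 _ Hj)).
  rewrite !Cmod_mult, !Cmod_div, !Cmod_INR, Cmod_R, Delta_coef_diag by apply HC.
  generalize (INR_fact_lt_0 k) (INR_fact_lt_0 n) (INR_fact_lt_0 (k + n)) (rising_shift_ge0 n k). intros.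
  rewrite Rabs_pos_eq by (apply Rmult_le_pos; [apply Rdiv_le_0_compat; [apply pos_INR | lra] | lra]).
  set (r := rising (theta + INR n) k) in *.
  replace (Cmod (Cderive_n k phi 0) / INR (fact k) * (Cmod (Cderive_n (k + n) f 0) / INR (fact (k + n)))
           * (INR (fact (k + n)) / INR (fact n) * r))
    with (Cmod (Cderive_n k phi 0) * Cmod (Cderive_n (k + n) f 0) * (r / (INR (fact k) * INR (fact n))))
    by (field; lra).
  apply Rle_trans with (A * a ^ k * (F * b ^ (k + n)) * (r / (INR (fact k) * INR (fact n)))).
  - apply Rmult_le_compat_r; [apply Rdiv_le_0_compat; nra |].
    apply Rmult_le_compat; auto using Cmod_ge_0.
  - right. rewrite pow_add, Rpow_mult_distr. field. lra.
Qed.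

Lemma diag_bound_summable n :
  ex_series (diag_bound a b theta A F n) /\
  Series (diag_bound a b theta A F n)
    <= A * F * Rpower (1 - a * b) (- theta) * ((b / (1 - a * b)) ^ n / INR (fact n)).
Proof.
  assert (Hx : 0 <= a * b < 1) by nra.
  assert (Hs : 0 <= theta + INR n) by (generalize (pos_INR n); lra).
  destruct (binom_series_le (theta + INR n) (a * b) Hs Hx) as [Hex Hle].
  assert (HAFb : 0 <= A * F * (b ^ n / INR (fact n))).
  { generalize (diag_bound_ge0 n O). unfold diag_bound. simpl. rewrite Rmult_1_r.
    replace (1 / 1) with 1 by field. lra. }
  split; [exact (ex_series_scal (V := R_NormedModule) _ _ Hex) |].
  unfold diag_bound. rewrite Series_scal_l.
  eapply Rle_trans; [exact (Rmult_le_compat_l _ _ _ HAFb Hle) |]. right.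
  assert (Hq : 0 < 1 - a * b) by lra.
  rewrite Ropp_plus_distr, Rpower_plus, (Rpower_Ropp _ (INR n)), Rpower_pow by exact Hq.
  unfold Rdiv. rewrite Rpow_mult_distr, pow_inv. field.
  split; [apply INR_fact_neq_0 | apply pow_nonzero; lra].
Qed.

Lemma Cmod_comp_coef_le n :
  Cmod (comp_coef theta phi f n)
    <= A * F * Rpower (1 - a * b) (- theta) * ((b / (1 - a * b)) ^ n / INR (fact n)).
Proof.
  destruct (diag_bound_summable n) as [Hex Hle].
  eapply Rle_trans; [| exact Hle]. apply Cmod_CSeries_le; [apply Cmod_diag_coef_le | exact Hex].
Qed.

Lemma exp_type_comp_coef : exp_type (comp_coef theta phi f).
Proof.
  exists (A * F * Rpower (1 - a * b) (- theta)), (b / (1 - a * b)).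
  split; [apply Rlt_le, Rdiv_lt_0_compat; lra |].
  intro n. eapply Rle_trans; [apply Cmod_comp_coef_le | right; unfold Rdiv; ring].
Qed.

Lemma ex_series_diag_bound_columns (x : R) :
  ex_series (fun n => Series (fun k => diag_bound a b theta A F n k * x ^ n)).
Proof.
  set (P := A * F * Rpower (1 - a * b) (- theta)).
  apply (ex_series_le (V := R_CompleteNormedModule) _
           (fun n => P * ((b / (1 - a * b) * Rabs x) ^ n / INR (fact n)))).
  - intro n. change (Rabs (Series (fun k => diag_bound a b theta A F n k * x ^ n))
                     <= P * ((b / (1 - a * b) * Rabs x) ^ n / INR (fact n))).
    rewrite Series_scal_r, Rabs_mult, <- RPow_abs, Rabs_pos_eq.
    + eapply Rle_trans; [apply Rmult_le_compat_r; [apply pow_le, Rabs_pos | apply diag_bound_summable] |].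
      right. rewrite Rpow_mult_distr. unfold P, Rdiv. ring.
    + apply Series_ge0; [intro; apply diag_bound_ge0 | apply diag_bound_summable].
  - exact (ex_series_scal (V := R_NormedModule) P _ (ex_series_exp_terms _)).
Qed.

Lemma phi_Delta_by_columns z :
  (forall k, ex_series (op_term theta phi f z k)) /\
  ex_series (op_inner theta phi f z) /\
  phi_Delta theta phi f z = Cpseries (comp_coef theta phi f) z.
Proof.
  set (U := fun k n => (diag_coef theta phi f n k * Cpow z n)%C).
  set (v := fun k n => diag_bound a b theta A F n k * Cmod z ^ n).
  assert (HUv : forall k n, Cmod (U k n) <= v k n).
  { intros k n. unfold U, v. rewrite Cmod_mult, Cmod_pow.
    apply Rmult_le_compat_r; [apply pow_le, Cmod_ge_0 | apply Cmod_diag_coef_le]. }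
  assert (Hcol : forall n, ex_series (fun k => v k n)).
  { intro n. eapply ex_series_ext;
      [| exact (ex_series_scal (V := R_NormedModule) (Cmod z ^ n) _ (proj1 (diag_bound_summable n)))].
    intro k. unfold v. simpl.
    change (Cmod z ^ n * diag_bound a b theta A F n k = diag_bound a b theta A F n k * Cmod z ^ n). ring. }
  assert (Hcols : ex_series (fun n => Series (fun k => v k n))) by apply ex_series_diag_bound_columns.
  destruct (fubini_C U v HUv Hcol Hcols) as [Hrow [Hrows Hswap]].
  assert (Hinner : op_inner theta phi f z = fun k => CSeries (U k)).
  { apply functional_extensionality. intro k. unfold op_inner.
    rewrite (CSeries_shift _ k (fun m => op_term_lt theta phi f z k m)).
    f_equal. apply functional_extensionality. intro n. apply op_term_diag. }
  assert (Hcolsum : (fun n => CSeries (fun k => U k n)) = fun n => (comp_coef theta phi f n * Cpow z n)%C).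
  { apply functional_extensionality. intro n. apply CSeries_unique.
    assert (Hn := CSeries_correct _ (ex_series_le (V := C_CompleteNormedModule) _ _
                     (Cmod_diag_coef_le n) (proj1 (diag_bound_summable n)))).
    replace (comp_coef theta phi f n * Cpow z n)%C with (Cpow z n * comp_coef theta phi f n)%C by ring.
    eapply is_series_ext; [| exact (is_series_scal_l (V := C_NormedModule) (Cpow z n) _ _ Hn)].
    intro k. unfold U.
    change (Cpow z n * diag_coef theta phi f n k = diag_coef theta phi f n k * Cpow z n)%C. ring. }
  split; [| split].
  - intro k. apply (ex_series_incr_n (V := C_NormedModule) _ k).
    eapply ex_series_ext; [| exact (Hrow k)]. intro n. symmetry. apply op_term_diag.
  - now rewrite Hinner.
  - unfold phi_Delta, Cpseries. now rewrite Hinner, Hswap, Hcolsum.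
Qed.

Lemma Bseq_Cpseries_comp_coef_le k :
  Bseq (b / (1 - a * b)) (Cpseries (comp_coef theta phi f)) k
    <= Rpower (1 - a * b) (- theta) * A * F.
Proof.
  unfold Bseq. rewrite Cderive_n_Cpseries_0 by exact exp_type_comp_coef.
  rewrite Cmod_mult, Cmod_INR.
  assert (Hck : 0 < (b / (1 - a * b)) ^ k) by (apply pow_lt, Rdiv_lt_0_compat; lra).
  assert (Hfact := INR_fact_lt_0 k).
  eapply Rle_trans.
  - apply Rmult_le_compat_l; [apply Rlt_le, Rinv_0_lt_compat, Hck |].
    apply Rmult_le_compat_l; [lra | apply Cmod_comp_coef_le].
  - right. field. lra.
Qed.

End Composition.

Theorem proposition1p4 (a b theta : R) (phi f : C -> C) :
  0 < a -> 0 < b -> a * b < 1 ->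
  inB a phi -> inB b f -> 0 <= theta ->
  (forall (z : C) (k : nat), ex_series (op_term theta phi f z k)) /\
  (forall z : C, ex_series (op_inner theta phi f z)) /\
  inB (b / (1 - a * b)) (phi_Delta theta phi f) /\
  normB (b / (1 - a * b)) (phi_Delta theta phi f)
    <= Rpower (1 - a * b) (- theta) * normB a phi * normB b f.
Proof.
  intros Ha Hb Hab Hphi Hf Htheta.
  pose proof (inB_Cderive_bound a phi Ha Hphi) as HphiD.
  pose proof (inB_Cderive_bound b f Hb Hf) as HfD.
  pose proof (phi_Delta_by_columns _ _ _ _ _ _ _ Ha Hb Hab Htheta HphiD HfD) as Hcols.
  assert (Hg : phi_Delta theta phi f = Cpseries (comp_coef theta phi f))
    by (apply functional_extensionality; intro z; apply Hcols).
  assert (Hexp := exp_type_comp_coef _ _ _ _ _ _ _ Ha Hb Hab Htheta HphiD HfD).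
  assert (HB := Bseq_Cpseries_comp_coef_le _ _ _ _ _ _ _ Ha Hb Hab Htheta HphiD HfD).
  rewrite Hg.
  split; [intros z k; apply Hcols | split; [intro z; apply Hcols | split]].
  - split; [intro z; eexists; exact (is_derive_Cpseries _ z Hexp) | eexists; exact HB].
  - exact (proj2 (normB_spec _ _ _ HB)).
Qed.
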